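(* Fix $q\in[0,1)$. For $n\in\mathbb{N}$ let $\Pi_n$ be $\pi_{n,q}$-distributed and $T_n=\mathrm{BST}(\Pi_n)$. Define $\psi_R:\mathbb{T}\to[0,1]$ by $\psi_R(v)=1$ if $v\in\{1^k:k\ge0\}$ and $\psi_R(v)=0$ otherwise. Then $T_n$ converges to $\psi_R$ with respect to subtree sizes: for every $r\ge1$ and all $v_1,\dots,v_r\in\mathbb{T}$, $$\big(\tau_{T_n}(v_i)\big)_{1\le i\le r}\longrightarrow\big(\psi_R(v_i)\big)_{1\le i\le r}\quad\text{in distribution}.$$
   Context: $\pi_{n,q}(\sigma)=q^{\mathrm{Inv}(\sigma)}/Z_{n,q}$ on $S_n$, $\mathrm{Inv}(\sigma)=|\{i<j:\sigma(i)>\sigma(j)\}|$, $0^0=1$. $\mathbb{T}$ is the set of finite words over $\{0,1\}$ with empty word $\varnothing$; $1^k$ is the word of $k$ ones ($1^0=\varnothing$); $v\mathbb{T}=\{vw:w\in\mathbb{T}\}$. For a finite sequence $x=(x_1,\dots,x_n)$ of distinct numbers, $\mathrm{BST}(x)=\emptyset$ if $n=0$, else $\{\varnothing\}\cup0\,\mathrm{BST}(x_-)\cup1\,\mathrm{BST}(x_+)$ with $x_-$ (resp. $x_+$) the subsequence of entries smaller (resp. larger) than $x_1$ in original order, and $aS=\{aw:w\in S\}$; $\mathrm{BST}(\sigma)=\mathrm{BST}(\sigma(1),\dots,\sigma(n))$. For a finite nonempty binary tree $T\subseteq\mathbb{T}$, $\tau_T(v)=|T\cap v\mathbb{T}|/|T|$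 for $v\in\mathbb{T}$. *)

From HB Require Import structures.
From mathcomp Require Import all_boot all_order all_algebra all_fingroup.
From mathcomp Require Import all_classical all_reals all_analysis.
Set Implicit Arguments. Unset Strict Implicit. Unset Printing Implicit Defensive.
Import Order.TTheory GRing.Theory Num.Theory.

(* Words over {0,1}: seq bool, with false = 0 and true = 1. *)

(* BST of a sequence of distinct naturals, as a list of words (nodes);
   fuel-based, fuel = size x suffices. *)
Fixpoint bst_fuel (fuel : nat) (x : seq nat) : seq (seq bool) :=
  match fuel, x with
  | 0, _ => [::]
  | _, [::] => [::]
  | fuel'.+1, a :: t =>
      [::] :: map (cons false) (bst_fuel fuel' [seq y <- t | (y < a)%N])
           ++ map (cons true) (bst_fuel fuel' [seq y <- t | (a < y)%N])
  end.

Definition bst (x : seq nat) : seq (seq bool) := bst_fuel (size x) x.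

(* BST(sigma) for sigma in S_n, using (sigma(0),...,sigma(n-1)) (0-based values,
   same relative order). *)
Definition bst_perm (n : nat) (s : 'S_n) : seq (seq bool) :=
  bst [seq nat_of_ord (s i) | i <- enum 'I_n].

Definition inv_count (n : nat) (s : 'S_n) : nat :=
  #|[set p : 'I_n * 'I_n | (p.1 < p.2)%N && (s p.2 < s p.1)%N]|.

Local Open Scope ring_scope.

(* Mallows distribution pi_{n,q} (note 0 ^+ 0 = 1). *)
Definition mallows (R : realType) (q : R) (n : nat) (s : 'S_n) : R :=
  q ^+ inv_count s / \sum_(t : 'S_n) q ^+ inv_count t.

Definition tau (R : realType) (T : seq (seq bool)) (v : seq bool) : R :=
  (count (fun w => prefix v w) (undup T))%:R / (size (undup T))%:R.

Definition psiR (R : realType) (v : seq bool) : R :=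
  if all (fun b => b == true) v then 1 else 0.

Definition exp_tau (R : realType) (q : R) (r : nat) (v : 'I_r -> seq bool)
  (f : 'rV[R]_r -> R) (n : nat) : R :=
  \sum_(s : 'S_n) mallows q s * f (\row_i tau R (bst_perm s) (v i)).

From HB Require Import structures.
From mathcomp Require Import all_boot all_order all_algebra all_fingroup.
From mathcomp Require Import all_classical all_reals all_analysis.
From mathcomp Require Import zify ring lra.
Import Order.TTheory GRing.Theory Num.Theory.
Import numFieldNormedType.Exports.
Set Implicit Arguments. Unset Strict Implicit. Unset Printing Implicit Defensive.

(* Under the Mallows measure a permutation of 'I_n.+1 splits into its first
   value a and a permutation of 'I_n, and the number of inversions grows by
   exactly a: the first value has weight q ^ a independently of the rest.
   Hence, with probability at least 1 - L q ^ (d + 1), each of the first L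
   entries exceeds at most d of the later ones.  On that event every step down
   the right spine of the binary search tree passes a root whose left subtree
   has at most d nodes, so at most k (d + 1) of the n nodes lie outside the
   subtree rooted at 1^k, and |tau(v) - psi_R(v)| <= k (d + 1) / n when
   |v| <= k.  Since (d + 1) q ^ (d + 1) -> 0, the vector (tau(v_i))_i converges
   in probability to the constant (psi_R(v_i))_i, which gives convergence in
   distribution. *)

(** * Shape of the binary search tree *)

Lemma uniq_bst_fuel f x : uniq (bst_fuel f x).
Proof.
elim: f x => [|f IH] [|a t] //=.
rewrite cat_uniq !map_inj_uniq ?IH //; try by move=> ? ? [].
rewrite mem_cat negb_or /=; apply/and3P; split => //.
  by apply/andP; split; apply/mapP => -[].
by apply/hasPn => _ /mapP [u _ ->]; apply/mapP => -[].
Qed.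

Lemma size_bst_fuel_le f x : size (bst_fuel f x) <= size x.
Proof.
elim: f x => [|f IH] [|a t] //=.
rewrite size_cat !size_map ltnS (leq_trans (leq_add (IH _) (IH _))) //.
rewrite !size_filter -(count_predC (fun y => y < a) t) leq_add2l.
by apply: sub_count => y /=; rewrite -leqNgt => /ltnW.
Qed.

Lemma size_bst_fuel f x : uniq x -> size x <= f -> size (bst_fuel f x) = size x.
Proof.
elim: f x => [|f IH] [|a t] //= /andP [a_notin_t uniq_t] size_t.
have size_filter_le p : size [seq y <- t | p y] <= f.
  by rewrite size_filter (leq_trans (count_size _ _)).
rewrite size_cat !size_map !IH ?filter_uniq // !size_filter.
rewrite -(count_predC (fun y => y < a) t); congr (_.+1 + _).
apply: eq_in_count => y y_in_t /=.
have a_neq_y : y != a by apply: contraNneq a_notin_t => <-.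
by rewrite ltn_neqAle eq_sym a_neq_y -leqNgt.
Qed.

Definition off_spine (T : seq (seq bool)) k := size T - count (prefix (nseq k true)) T.

Lemma off_spine0 T : off_spine T 0 = 0.
Proof. by rewrite /off_spine (eq_count (a2 := predT)) ?count_predT ?subnn //; case. Qed.

Lemma off_spine_mono T : {homo off_spine T : k K / k <= K}.
Proof.
move=> k K le_kK; rewrite leq_sub2l //; apply: sub_count => w /=.
by apply: prefix_trans; rewrite prefixE size_nseq take_nseq.
Qed.

Lemma off_spine_bst_cons f a t k :
  off_spine (bst_fuel f.+1 (a :: t)) k.+1 =
  (size (bst_fuel f [seq y <- t | y < a])).+1 +
  off_spine (bst_fuel f [seq y <- t | a < y]) k.
Proof.
rewrite /off_spine /= size_cat !size_map count_cat !count_map.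
rewrite (eq_count (a2 := pred0)) // count_pred0.
rewrite (eq_count (a2 := prefix (nseq k true))) //.
by rewrite add0n -addSn addnBA ?count_size.
Qed.

Lemma count_prefix_le_off_spine T v : ~~ all (fun b => b == true) v ->
  count (prefix v) T <= off_spine T (size v).
Proof.
move=> not_spine; rewrite leq_subRL ?count_size // addnC -count_predUI.
rewrite (eq_count (a1 := predI _ _) (a2 := pred0)) ?count_pred0 ?addn0 ?count_size //.
move=> w /=; rewrite !prefixE size_nseq; apply: contraNF not_spine.
case/andP => /eqP v_pre /eqP spine_pre.
by apply/all_pred1P; rewrite -v_pre spine_pre size_nseq.
Qed.

Fixpoint ranks_le (L d : nat) (x : seq nat) : bool :=
  match L, x with
  | L'.+1, a :: t => (count (fun y => y <= a) t <= d) && ranks_le L' d t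
  | _, _ => true
  end.

Lemma ranks_le_filter (p : pred nat) L d t :
  ranks_le L d t -> ranks_le (L - count (predC p) t) d [seq y <- t | p y].
Proof.
elim: t L => [|a t IH] [|L] //= /andP [rank_a ranks_t].
case: (boolP (p a)) => pa /=; last by rewrite add1n subSS IH.
rewrite add0n; case: (ltnP L (count (predC p) t)) => [lt_Lc|le_cL].
  by move: lt_Lc; rewrite -subn_eq0 => /eqP ->.
rewrite subSn //=; apply/andP; split; last exact: IH.
by rewrite count_filter (leq_trans _ rank_a) //; apply: sub_count => y /andP [].
Qed.

Lemma off_spine_bst_le k d L f x : size x <= f -> ranks_le L d x ->
  k * d.+1 <= L -> off_spine (bst_fuel f x) k <= k * d.+1.
Proof.
elim: k d L f x => [|k IH] d L f x; first by rewrite off_spine0.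
case: f => [|f]; first by rewrite /off_spine.
case: x => [|a t]; first by rewrite /off_spine.
case: L => [|L] //= size_t /andP [rank_a ranks_t] le_L.
have rank_a' : count (predC (fun y => a < y)) t <= d.
  by apply: leq_trans rank_a; apply: sub_count => y /=; rewrite -leqNgt.
rewrite off_spine_bst_cons mulSn; apply: leq_add.
  rewrite ltnS (leq_trans (size_bst_fuel_le _ _)) // size_filter.
  by apply: leq_trans rank_a; apply: sub_count => y /ltnW.
apply: (IH d (L - count (predC (fun y => a < y)) t)).
- by rewrite size_filter (leq_trans (count_size _ _)).
- exact: ranks_le_filter.
- by move: le_L rank_a'; rewrite mulSn; lia.
Qed.

(** * Permutations by their first value *)

Definition perm_seq n (s : 'S_n) : seq nat := [seq nat_of_ord (s i) | i <- enum 'I_n].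

Lemma uniq_perm_seq n (s : 'S_n) : uniq (perm_seq s).
Proof. by rewrite map_inj_uniq ?enum_uniq // => i j /val_inj /perm_inj. Qed.

Lemma size_perm_seq n (s : 'S_n) : size (perm_seq s) = n.
Proof. by rewrite size_map size_enum_ord. Qed.

Lemma perm_seq_iota n (s : 'S_n) : perm_eq (perm_seq s) (iota 0 n).
Proof.
apply: uniq_perm; rewrite ?uniq_perm_seq ?iota_uniq // => y.
rewrite mem_iota add0n /=; apply/mapP/idP => [[i _ ->] // | lt_yn].
by exists ((s^-1)%g (Ordinal lt_yn)); rewrite ?mem_enum ?permKV.
Qed.

Lemma count_ltn_perm_seq n (s : 'S_n) a : a <= n ->
  count (fun y => y < a) (perm_seq s) = a.
Proof.
move=> le_an; rewrite (seq.permP (perm_seq_iota s)) -size_filter.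
by rewrite (filter_iota_ltn 0) ?size_iota.
Qed.

Lemma perm_seq_lift n (a : 'I_n.+1) (t : 'S_n) :
  perm_seq (lift_perm ord0 a t) = (a : nat) :: map (bump a) (perm_seq t).
Proof.
rewrite /perm_seq enum_ordSl /= lift_perm_id -!map_comp; congr (_ :: _).
by apply: eq_map => i /=; rewrite lift_perm_lift.
Qed.

Lemma inv_countE n (s : 'S_n) :
  inv_count s = \sum_(i < n) \sum_(j < n) ((i < j) && (s j < s i) : nat).
Proof.
rewrite /inv_count -sum1_card big_mkcond pair_big.
by apply: eq_bigr => -[i j] _; rewrite inE; case: (_ && _).
Qed.

Lemma sum_ltn_perm n (t : 'S_n) a : a <= n -> \sum_(j < n) (t j < a : nat) = a.
Proof.
move=> le_an; rewrite -[RHS](count_ltn_perm_seq t le_an) count_map -sum1_count.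
by rewrite big_enum_cond [RHS]big_mkcond.
Qed.

Lemma inv_count_lift n (a : 'I_n.+1) (t : 'S_n) :
  inv_count (lift_perm ord0 a t) = a + inv_count t.
Proof.
have bump_ltn x : (bump a x < a) = (x < a) by rewrite /bump; case: leqP; lia.
have ltn_bump2 h x y : (bump h x < bump h y) = (x < y) by rewrite !ltnNge leq_bump2.
rewrite !inv_countE big_ord_recl big_ord_recl lift_perm_id /= add0n; congr (_ + _).
  under eq_bigr do rewrite lift_perm_lift /= bump_ltn.
  by rewrite sum_ltn_perm // -ltnS.
apply: eq_bigr => i _; rewrite big_ord_recl /= add0n.
by apply: eq_bigr => j _; rewrite !lift_perm_lift /= !ltn_bump2.
Qed.

Lemma lift_perm0_bij n :
  bijective (fun p : 'I_n.+1 * 'S_n => lift_perm ord0 p.1 p.2).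
Proof.
apply: inj_card_bij; last by rewrite card_prod card_ord !card_Sn factS.
move=> [a t] [b u] /= eq_lift.
have eq_ab : a = b by rewrite -(lift_perm_id ord0 a t) eq_lift lift_perm_id.
subst b; congr (_, _); apply/permP => k.
by apply: (@lift_inj _ a); rewrite -!(lift_perm_lift ord0) eq_lift.
Qed.

Lemma ranks_le_lift n L d (a : 'I_n.+1) (t : 'S_n) :
  ranks_le L.+1 d (perm_seq (lift_perm ord0 a t)) = (a <= d) && ranks_le L d (perm_seq t).
Proof.
have ranks_le_bump L' x : ranks_le L' d (map (bump a) x) = ranks_le L' d x.
  elim: x L' => [|y x IH] [|L'] //=; rewrite IH count_map.
  by rewrite (eq_count (a2 := leq^~ y)) // => z /=; rewrite leq_bump2.
rewrite perm_seq_lift /= ranks_le_bump count_map.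
have bump_leq y : (bump a y <= a) = (y < a) by rewrite /bump; case: leqP; lia.
rewrite (eq_count (a2 := fun y => y < a)); last by move=> y /=; rewrite bump_leq.
by rewrite count_ltn_perm_seq // -ltnS.
Qed.

Local Open Scope classical_set_scope.
Local Open Scope ring_scope.

Lemma sum_lift_perm (V : nmodType) n (F : 'S_n.+1 -> V) :
  \sum_(s : 'S_n.+1) F s = \sum_(a < n.+1) \sum_(t : 'S_n) F (lift_perm ord0 a t).
Proof. by rewrite pair_big (reindex _ (onW_bij _ (lift_perm0_bij n))). Qed.

(** * The Mallows measure *)

Definition mallowsZ (R : pzSemiRingType) (q : R) n := \sum_(s : 'S_n) q ^+ inv_count s.

Lemma mallowsZS (R : comPzSemiRingType) (q : R) n :
  mallowsZ q n.+1 = (\sum_(a < n.+1) q ^+ a) * mallowsZ q n.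
Proof.
rewrite /mallowsZ sum_lift_perm big_distrl /=; apply: eq_bigr => a _.
by rewrite big_distrr /=; apply: eq_bigr => t _; rewrite inv_count_lift exprD.
Qed.

Lemma inv_count1 n : inv_count (1 : 'S_n) = 0%N.
Proof.
rewrite inv_countE big1 // => i _; rewrite big1 // => j _.
by rewrite !perm1; case: ltngtP.
Qed.

Lemma mallowsZ_gt0 (R : numDomainType) (q : R) n : 0 <= q -> 0 < mallowsZ q n.
Proof.
move=> q_ge0; rewrite /mallowsZ (bigD1 1%g) //= inv_count1 expr0.
by rewrite ltr_pwDl // sumr_ge0 // => s _; rewrite exprn_ge0.
Qed.

Lemma mallows_ge0 (R : realType) (q : R) n (s : 'S_n) : 0 <= q -> 0 <= mallows q s.
Proof. by move=> q_ge0; rewrite divr_ge0 ?exprn_ge0 // ltW // mallowsZ_gt0. Qed.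

Lemma mallows_sum1 (R : realType) (q : R) n : 0 <= q -> \sum_(s : 'S_n) mallows q s = 1.
Proof. by move=> q_ge0; rewrite /mallows -big_distrl /= mulfV // gt_eqF // mallowsZ_gt0. Qed.

Lemma sum_expr_gt_le (R : numDomainType) (q : R) N d : 0 <= q ->
  \sum_(a < N) (d < a)%:R * q ^+ a <= q ^+ d.+1 * \sum_(a < N) q ^+ a.
Proof.
move=> q_ge0; elim: N d => [|N IH] d; first by rewrite !big_ord0 mulr0.
have sum_le : \sum_(a < N) q ^+ a <= \sum_(a < N.+1) q ^+ a.
  by rewrite [leRHS]big_ord_recr lerDl exprn_ge0.
rewrite big_ord_recl mul0r add0r exprS -mulrA.
under eq_bigr do rewrite lift0 ltnS exprS mulrCA.
rewrite -big_distrr ler_wpM2l //; case: d => [|d].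
  under eq_bigr do rewrite mul1r.
  by rewrite expr0 mul1r.
by apply: le_trans (IH d) _; rewrite ler_wpM2l ?exprn_ge0.
Qed.

Lemma weight_not_ranks_le (R : numDomainType) (q : R) n L d : 0 <= q ->
  \sum_(s : 'S_n | ~~ ranks_le L d (perm_seq s)) q ^+ inv_count s
    <= L%:R * q ^+ d.+1 * mallowsZ q n.
Proof.
move=> q_ge0; elim: n L => [|n IH] [|L]; try by rewrite big_pred0 ?mul0r.
  rewrite big_pred0; last by move=> s; rewrite /perm_seq enum_ord0.
  by rewrite !mulr_ge0 ?exprn_ge0 // ltW // mallowsZ_gt0.
set Z := mallowsZ q n; set G := \sum_(a < n.+1) q ^+ a.
have Z_ge0 : 0 <= Z by rewrite ltW ?mallowsZ_gt0.
have split_bad a : \sum_(t : 'S_n) (if ~~ ranks_le L.+1 d (perm_seq (lift_perm ord0 a t))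
      then q ^+ inv_count (lift_perm ord0 a t) else 0)
    <= (d < a)%:R * q ^+ a * Z + q ^+ a * (L%:R * q ^+ d.+1 * Z).
  apply: le_trans (lerD (lexx _) (ler_wpM2l (exprn_ge0 a q_ge0) (IH L))).
  rewrite /Z /mallowsZ !big_distrr [X in _ <= _ + X]big_mkcond -big_split.
  apply: ler_sum => t _; rewrite ranks_le_lift inv_count_lift exprD negb_and -ltnNge.
  have X_ge0 : 0 <= q ^+ a * q ^+ inv_count t by rewrite mulr_ge0 ?exprn_ge0.
  by case: (d < a)%N; case: ranks_le; rewrite /= ?mul1r ?mul0r ?add0r ?addr0 ?lerDl.
rewrite big_mkcond sum_lift_perm mallowsZS -/Z -/G.
apply: le_trans (ler_sum _ (fun a _ => split_bad a)) _.
rewrite big_split /= -!big_distrl /= -/G.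
apply: le_trans (lerD (ler_wpM2r Z_ge0 (sum_expr_gt_le _ _ q_ge0)) (lexx _)) _.
by rewrite -/G -natr1 le_eqVlt; apply/orP; left; apply/eqP; ring.
Qed.

Lemma mallows_not_ranks_le (R : realType) (q : R) n L d : 0 <= q ->
  \sum_(s : 'S_n | ~~ ranks_le L d (perm_seq s)) mallows q s <= L%:R * q ^+ d.+1.
Proof.
move=> q_ge0; rewrite -big_distrl /= ler_pdivrMr ?mallowsZ_gt0 //.
exact: weight_not_ranks_le.
Qed.

Lemma mx_norm_lt (R : numFieldType) m n (x : 'M[R]_(m, n)) e :
  0 < e -> (forall i j, `|x i j| < e) -> `|x| < e.
Proof.
move=> e_gt0 x_lt; have : ball 0 e x.
  by split => // i j; rewrite -ball_normE /= !mxE sub0r normrN.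
by rewrite -ball_normE /= sub0r normrN.
Qed.

Lemma dist_tau_psiR (R : realType) T v : uniq T -> (0 < size T)%N ->
  `|tau R T v - psiR R v| <= (off_spine T (size v))%:R / (size T)%:R.
Proof.
move=> uniq_T T_gt0; rewrite /tau undup_id //.
have size_gt0 : 0 < (size T)%:R :> R by rewrite ltr0n.
rewrite /psiR; case: ifP => spine_v.
  have /all_pred1P v_spine := spine_v.
  rewrite /off_spine -v_spine natrB ?count_size // mulrBl divff ?gt_eqF //.
  by rewrite distrC ger0_norm // subr_ge0 ler_pdivrMr // mul1r ler_nat count_size.
rewrite subr0 ger0_norm ?divr_ge0 // ler_wpM2r ?invr_ge0 ?ler0n // ler_nat.
by apply: count_prefix_le_off_spine; rewrite spine_v.
Qed.

Lemma dist_tau_bst_perm (R : realType) n (s : 'S_n) K d v : (0 < n)%N ->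
  ranks_le (K * d.+1) d (perm_seq s) -> (size v <= K)%N ->
  `|tau R (bst_perm s) v - psiR R v| <= (K * d.+1)%:R / n%:R.
Proof.
move=> n_gt0 ranks_s size_v.
have size_bst : size (bst_perm s) = n.
  by rewrite size_bst_fuel ?uniq_perm_seq ?size_perm_seq.
apply: le_trans (dist_tau_psiR _ _ (uniq_bst_fuel _ _) _) _; rewrite size_bst //.
rewrite ler_wpM2r ?invr_ge0 ?ler0n // ler_nat (leq_trans (off_spine_mono _ size_v)) //.
exact: (off_spine_bst_le (L := K * d.+1)).
Qed.

(** * Convergence *)

Lemma bernoulli_ineq (R : realDomainType) (h : R) m : 0 <= h -> 1 + m%:R * h <= (1 + h) ^+ m.
Proof.
move=> h_ge0; elim: m => [|m IH]; first by rewrite mul0r addr0 expr0.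
rewrite exprS (le_trans _ (ler_wpM2l _ IH)) ?addr_ge0 //.
have m_ge0 : 0 <= m%:R :> R by rewrite ler0n.
by rewrite -natr1; nra.
Qed.

(* With [p = (1 + q) / 2] one has [q <= p ^ 2] and, by Bernoulli's inequality
   for [1 / p = 1 + h], [m p ^ m <= 1 / h]; hence [m q ^ m <= p ^ m / h]. *)
Lemma cvg_mulrn_expr (R : archiRealFieldType) (q : R) : 0 <= q -> q < 1 ->
  (fun m => m%:R * q ^+ m) @ \oo --> 0.
Proof.
move=> q_ge0 q_lt1; pose p := (1 + q) / 2; pose h := p^-1 - 1.
have p_gt0 : 0 < p by rewrite /p; lra.
have p_lt1 : p < 1 by rewrite /p; lra.
have q_le : q <= p ^+ 2 by rewrite /p expr2; nra.
have h_gt0 : 0 < h by rewrite /h subr_gt0 invf_gt1.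
have mp_le m : m%:R * p ^+ m <= h^-1.
  have pm_gt0 := exprn_gt0 m p_gt0.
  have := ler_wpM2r (ltW pm_gt0) (bernoulli_ineq m (ltW h_gt0)).
  rewrite {2}/h subrKC exprVn mulVf ?gt_eqF // => bern.
  by rewrite -(ler_pM2l h_gt0) mulfV ?gt_eqF //; nra.
apply: (@squeeze_cvgr _ _ _ _ (cst 0) (fun m => h^-1 * p ^+ m)).
- near=> m; rewrite mulr_ge0 ?ler0n ?exprn_ge0 //=.
  apply: le_trans (ler_wpM2r (exprn_ge0 m (ltW p_gt0)) (mp_le m)).
  rewrite -mulrA -exprMn -expr2 ler_wpM2l ?ler0n //.
  by rewrite lerXn2r ?nnegrE ?exprn_ge0 // ltW.
- exact: cvg_cst.
- rewrite -(mulr0 h^-1); apply: cvgMl_tmp; apply: cvg_expr.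
  by rewrite ger0_norm // ltW.
Unshelve. all: by end_near.
Qed.

Lemma dist_expect_le (R : realFieldType) (V : normedModType R) (T : finType)
    (P : T -> R) (X : T -> V) (c : V) (f : V -> R) (M e eps : R) :
  (forall s, 0 <= P s) -> \sum_s P s = 1 -> (forall x, `|f x| <= M) -> 0 <= eps ->
  (forall x, `|c - x| < e -> `|f c - f x| <= eps) ->
  `|f c - \sum_s P s * f (X s)| <= eps + 2 * M * \sum_(s | e <= `|c - X s|) P s.
Proof.
move=> P_ge0 P_sum1 f_le_M eps_ge0 f_near.
have -> : f c = \sum_s P s * f c by rewrite -big_distrl /= P_sum1 mul1r.
rewrite -sumrB; apply: le_trans (ler_norm_sum _ _ _) _.
apply: (@le_trans _ _ (\sum_s P s * (eps + if e <= `|c - X s| then 2 * M else 0))).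
  apply: ler_sum => s _; rewrite -mulrBr normrM ger0_norm // ler_wpM2l //.
  case: (leP e) => [far | near]; rewrite ?addr0; last exact: f_near.
  have := f_le_M c; have := f_le_M (X s); have := ler_normB (f c) (f (X s)); lra.
under eq_bigr do rewrite mulrDr.
rewrite big_split /= -big_distrl /= P_sum1 mul1r lerD2l big_distrr /= [leRHS]big_mkcond.
by apply: ler_sum => s _; case: (leP e); rewrite ?mulr0 // mulrC.
Qed.

Lemma cvg_expect_of_cvg_in_prob (R : realFieldType) (V : normedModType R) (T : nat -> finType)
    (P : forall n, T n -> R) (X : forall n, T n -> V) (c : V) (f : V -> R) :
  (forall n s, 0 <= P n s) -> (forall n, \sum_s P n s = 1) ->
  {for c, continuous f} -> (exists M, forall x, `|f x| <= M) ->
  (forall e, 0 < e -> (fun n => \sum_(s | e <= `|c - X n s|) P n s) @ \oo --> 0) ->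
  (fun n => \sum_s P n s * f (X n s)) @ \oo --> f c.
Proof.
move=> P_ge0 P_sum1 f_cont [M f_le_M] far_cvg0.
apply/cvgrPdist_le => eps eps_gt0.
have M_ge0 : 0 <= M := le_trans (normr_ge0 _) (f_le_M c).
have /nbhs_normP [e e_gt0 f_near] : \forall x \near c, `|f c - f x| <= eps / 2.
  by move/cvgrPdist_le : f_cont; apply; rewrite divr_gt0.
have eta_gt0 : 0 < eps / 2 / (2 * M + 1) by rewrite !divr_gt0 //; lra.
move/cvgrPdist_le : (far_cvg0 e e_gt0) => /(_ _ eta_gt0); apply: filterS => n.
rewrite sub0r normrN ger0_norm ?sumr_ge0 // => far_small.
have eps2_ge0 : 0 <= eps / 2 by rewrite divr_ge0 // ltW.
apply: le_trans (dist_expect_le (X n) (P_ge0 n) (P_sum1 n) f_le_M eps2_ge0 f_near) _.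
rewrite ler_pdivlMr in far_small; last lra.
nra.
Qed.

Lemma cvg_in_prob_tau_bst (R : realType) (q : R) r (v : 'I_r -> seq bool) e :
  0 <= q -> q < 1 -> 0 < e ->
  (fun n => \sum_(s : 'S_n | e <= `|\row_i psiR R (v i) - \row_i tau R (bst_perm s) (v i)|)
     mallows q s) @ \oo --> 0.
Proof.
move=> q_ge0 q_lt1 e_gt0; apply/cvgrPdist_le => eta eta_gt0.
set K := (\max_(i < r) size (v i))%N.
have K_ge0 : 0 <= K%:R :> R by rewrite ler0n.
have [d d_small] : exists d, d.+1%:R * q ^+ d.+1 <= eta / (K%:R + 1).
  have eta_K : 0 < eta / (K%:R + 1) by rewrite divr_gt0 //; lra.
  have := cvg_mulrn_expr q_ge0 q_lt1; rewrite -cvg_shiftS.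
  move=> /cvgrPdist_le /(_ _ eta_K) /filter_ex [d]; rewrite sub0r normrN => d_small.
  by exists d; rewrite (le_trans (ler_norm _) d_small).
near=> n.
have n_gt0 : (0 < n)%N by near: n; exact: nbhs_infty_ge.
have n_large : (K * d.+1)%:R / n%:R < e.
  rewrite ltr_pdivrMr ?ltr0n // mulrC -ltr_pdivrMr //.
  by apply: lt_le_trans (ltr_pwDr ltr01 (lexx _)) _; near: n; exact: nbhs_infty_ger.
rewrite sub0r normrN ger0_norm ?sumr_ge0 // => [|s _]; last exact: mallows_ge0.
apply: (@le_trans _ _ (\sum_(s : 'S_n | ~~ ranks_le (K * d.+1) d (perm_seq s)) mallows q s)).
  rewrite big_mkcond [leRHS]big_mkcond; apply: ler_sum => s _.
  case: (boolP (ranks_le _ _ _)) => ranks_s /=; last by case: ifP; rewrite ?mallows_ge0.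
  rewrite ifF //; apply/negbTE; rewrite -ltNge; apply: mx_norm_lt => // i j.
  rewrite (ord1 i) !mxE distrC; apply: le_lt_trans n_large.
  by apply: dist_tau_bst_perm => //; apply: leq_bigmax.
apply: le_trans (mallows_not_ranks_le n (K * d.+1) d q_ge0) _.
rewrite natrM -mulrA (le_trans (ler_wpM2l K_ge0 d_small)) //.
by rewrite mulrA ler_pdivrMr; lra.
Unshelve. all: by end_near.
Qed.

Theorem theorem1p5 (R : realType) (q : R) (hq0 : 0 <= q) (hq1 : q < 1)
  (r : nat) (hr : (1 <= r)%N) (v : 'I_r -> seq bool)
  (f : 'rV[R]_r -> R) (fcont : continuous f)
  (fbd : exists M : R, forall x, `|f x| <= M) :
  (fun n : nat => exp_tau q v f n) @ \oo --> f (\row_i psiR R (v i)).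
Proof.
apply: (cvg_expect_of_cvg_in_prob (T := fun n => {perm 'I_n})) => //.
- by move=> n s; exact: mallows_ge0.
- by move=> n; exact: mallows_sum1.
- exact: fcont.
- by move=> e; exact: cvg_in_prob_tau_bst.
Qed.
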